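(* For every $T_0$ affine system $(X,\kappa,A)$, the source of all morphisms $(X,\kappa,A)\to\mathsf{S}$ is a mono-source: if $(f_1,\varphi_1),(f_2,\varphi_2):(\tilde X,\tilde\kappa,\tilde A)\to(X,\kappa,A)$ are morphisms with $(f,\varphi)\circ(f_1,\varphi_1)=(f,\varphi)\circ(f_2,\varphi_2)$ for every morphism $(f,\varphi):(X,\kappa,A)\to\mathsf{S}$, then $(f_1,\varphi_1)=(f_2,\varphi_2)$.
   Context: Fix a variety $\mathbf{A}$ of algebras (full subcategory of the category of $\Omega$-algebras and homomorphisms closed under products, subalgebras and homomorphic images) having a free algebra $S$ over a singleton $\{*\}$ with universal map $\eta:\{*\}\to|S|$; for an algebra $A$ and $a\in A$, $\overline{a}^A:S\to A$ is the unique homomorphism with $\eta( * )\mapsto a$. Fix an $\mathbf{A}$-algebra $L$; $L^X$ is the power algebra. An affine system is $(X,\kappa,A)$ with $X$ a set, $A$ an algebra, $\kappa:A\to L^X$ a homomorphism; a morphism $(f,\varphi):(X_1,\kappa_1,A_1)\to(X_2,\kappa_2,A_2)$ is a map $f:X_1\to X_2$ with a homomorphism $\varphi:A_2\to A_1$ such that $\kappa_1(\varphi(a))(x)=\kappa_2(a)(f(x))$ for all $a\in A_2,x\in X_1$; composition $(g,\psi)\circ(f,\varphi)=(g\circ f,\varphi\circ\psi)$. A system is $T_0$ if for all $x,y\in X$, $\kappa(a)(x)=\kappa(a)(y)$ for all $a\in A$ implies $x=y$. The Sierpinski affine system is $\mathsf{S}=(|L|,\kappa_S,S)$ with $\kappa_S:S\to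 L^{|L|}$ the unique homomorphism with $\kappa_S(s)(b)=\overline{b}^L(s)$ (equivalently $\kappa_S(\eta( * ))=\mathrm{id}_L$). *)

From Stdlib Require Import ClassicalEpsilon.

Set Implicit Arguments.

Record signature := Signature { op : Type; arity : op -> Type }.

Record algebra (Om : signature) := Algebra {
  carrier :> Type;
  ops : forall o : op Om, (arity Om o -> carrier) -> carrier }.

Definition is_hom (Om : signature) (A B : algebra Om) (h : A -> B) : Prop :=
  forall (o : op Om) (args : arity Om o -> A),
    h (ops A o args) = ops B o (fun i => h (args i)).

Definition prod_alg (Om : signature) (I : Type) (F : I -> algebra Om) : algebra Om :=
  @Algebra Om (forall i : I, F i)
    (fun o args => fun i => ops (F i) o (fun j => args j i)).

Definition pow_alg (Om : signature) (L : algebra Om) (X : Type) : algebra Om :=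
  prod_alg (fun _ : X => L).

Definition op_closed (Om : signature) (B : algebra Om) (P : B -> Prop) : Prop :=
  forall (o : op Om) (args : arity Om o -> B),
    (forall i, P (args i)) -> P (ops B o args).

Definition sub_alg (Om : signature) (B : algebra Om) (P : B -> Prop)
  (hP : @op_closed Om B P) : algebra Om :=
  @Algebra Om {x : B | P x}
    (fun o args => exist P (ops B o (fun i => proj1_sig (args i)))
                     (hP o _ (fun i => proj2_sig (args i)))).

Definition is_variety (Om : signature) (V : algebra Om -> Prop) : Prop :=
  (forall (I : Type) (F : I -> algebra Om), (forall i, V (F i)) -> V (prod_alg F)) /\
  (forall (B : algebra Om) (P : B -> Prop) (hP : @op_closed Om B P), V B -> V (@sub_alg Om B P hP)) /\
  (forall (B C : algebra Om) (h : B -> C), @is_hom Om B C h ->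
      (forall c : C, exists b : B, h b = c) -> V B -> V C).

(* S (with eta(star) = e) is a free algebra of V over a singleton *)
Definition is_free1 (Om : signature) (V : algebra Om -> Prop) (S : algebra Om) (e : S) : Prop :=
  V S /\ forall (B : algebra Om), V B -> forall b : B,
    exists! h : S -> B, @is_hom Om S B h /\ h e = b.

Definition bar (Om : signature) (V : algebra Om -> Prop) (S : algebra Om) (e : S)
  (hS : is_free1 V S e) (B : algebra Om) (hB : V B) (b : B) : S -> B :=
  proj1_sig (constructive_indefinite_description _
     (match proj2 hS B hB b with ex_intro _ h (conj Hh _) => ex_intro _ h Hh end)).

Record asys (Om : signature) (L : algebra Om) := ASys {
  pts : Type;
  alg : algebra Om;
  kap : alg -> pow_alg L pts }.

Definition is_asys (Om : signature) (V : algebra Om -> Prop) (L : algebra Om)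
  (X : asys L) : Prop :=
  V (alg X) /\ @is_hom Om (alg X) (pow_alg L (pts X)) (kap X).

Definition T0 (Om : signature) (L : algebra Om) (X : asys L) : Prop :=
  forall x y : pts X, (forall a : alg X, kap X a x = kap X a y) -> x = y.

Definition mor (Om : signature) (L : algebra Om) (X1 X2 : asys L) : Type :=
  ((pts X1 -> pts X2) * (alg X2 -> alg X1))%type.

Definition is_mor (Om : signature) (L : algebra Om) (X1 X2 : asys L)
  (m : mor X1 X2) : Prop :=
  @is_hom Om (alg X2) (alg X1) (snd m) /\
  forall (a : alg X2) (x : pts X1), kap X1 (snd m a) x = kap X2 a (fst m x).

Definition mcomp (Om : signature) (L : algebra Om) (X1 X2 X3 : asys L)
  (m2 : mor X2 X3) (m1 : mor X1 X2) : mor X1 X3 :=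
  (fun x => fst m2 (fst m1 x), fun a => snd m1 (snd m2 a)).

Definition sierp (Om : signature) (V : algebra Om -> Prop) (S : algebra Om) (e : S)
  (hS : is_free1 V S e) (L : algebra Om) (hL : V L) : asys L :=
  @ASys Om L (carrier L) S (fun (s : S) (b : L) => @bar Om V S e hS L hL b s).

(* Every [a : A] yields a morphism [(kappa a, bar a) : (X, kappa, A) -> S]; it is a morphism
   because both [s |-> kappa (bar a s) x] and [bar (kappa a x)] are homomorphisms [S -> L]
   agreeing on the generator.  Composing [m1] and [m2] with it and comparing point parts
   gives [kappa a (f1 y) = kappa a (f2 y)] for all [a], hence [f1 = f2] by T0; comparing
   algebra parts at the generator gives [phi1 a = phi2 a]. *)

From Stdlib Require Import FunctionalExtensionality ClassicalEpsilon.

Set Implicit Arguments.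

Lemma is_hom_comp (Om : signature) (A B C : algebra Om) (g : B -> C) (h : A -> B) :
  is_hom A B h -> is_hom B C g -> is_hom A C (fun a => g (h a)).
Proof. intros Hh Hg o args; rewrite Hh, Hg; reflexivity. Qed.

Lemma is_hom_eval (Om : signature) (L : algebra Om) (X : Type) (x : X) :
  is_hom (pow_alg L X) L (fun f => f x).
Proof. intros o args; reflexivity. Qed.

Lemma mor_ext (Om : signature) (L : algebra Om) (X1 X2 : asys L) (m1 m2 : mor X1 X2) :
  (forall x, fst m1 x = fst m2 x) -> (forall a, snd m1 a = snd m2 a) -> m1 = m2.
Proof.
  destruct m1 as [f1 phi1], m2 as [f2 phi2]; simpl; intros Hf Hphi.
  f_equal; apply functional_extensionality; assumption.
Qed.

Section FreeAlgebra.

Variables (Om : signature) (V : algebra Om -> Prop) (S : algebra Om) (e : S).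
Hypothesis hS : is_free1 V S e.

Lemma bar_hom (B : algebra Om) (hB : V B) (b : B) : is_hom S B (bar hS B hB b).
Proof.
  unfold bar; destruct (constructive_indefinite_description _ _) as [h Hh].
  exact (proj1 Hh).
Qed.

Lemma bar_generator (B : algebra Om) (hB : V B) (b : B) : bar hS B hB b e = b.
Proof.
  unfold bar; destruct (constructive_indefinite_description _ _) as [h Hh].
  exact (proj2 Hh).
Qed.

Lemma free1_hom_unique (B : algebra Om) (hB : V B) (h1 h2 : S -> B) :
  is_hom S B h1 -> is_hom S B h2 -> h1 e = h2 e -> forall s, h1 s = h2 s.
Proof.
  intros H1 H2 He s.
  destruct (proj2 hS B hB (h1 e)) as [h [_ Uniq]].
  rewrite <- (Uniq h1 (conj H1 eq_refl)), (Uniq h2 (conj H2 (eq_sym He))).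
  reflexivity.
Qed.

Variables (L : algebra Om) (hL : V L).

Definition sierp_mor {X : asys L} (hX : is_asys V X) (a : alg X) :
  mor X (@sierp Om V S e hS L hL) :=
  (fun x => kap X a x, bar hS (alg X) (proj1 hX) a).

Lemma sierp_mor_is_mor {X : asys L} (hX : is_asys V X) (a : alg X) :
  is_mor (sierp_mor hX a).
Proof.
  split; simpl.
  - apply bar_hom.
  - intros s x.
    apply (free1_hom_unique hL (h1 := fun s => kap X (bar hS (alg X) (proj1 hX) a s) x)).
    + exact (is_hom_comp (is_hom_comp (bar_hom (proj1 hX) a) (proj2 hX))
                         (is_hom_eval (L := L) x)).
    + apply bar_hom.
    + rewrite !bar_generator; reflexivity.
Qed.

End FreeAlgebra.

Theorem proposition5 (Om : signature) (V : algebra Om -> Prop) (hV : is_variety V)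
  (S : algebra Om) (e : S) (hS : is_free1 V S e)
  (L : algebra Om) (hL : V L)
  (X : asys L) (hX : is_asys V X) (hT0 : T0 X)
  (Y : asys L) (hY : is_asys V Y)
  (m1 m2 : mor Y X) (hm1 : is_mor m1) (hm2 : is_mor m2) :
  (forall m : mor X (@sierp Om V S e hS L hL), is_mor m -> mcomp m m1 = mcomp m m2) ->
  m1 = m2.
Proof.
  intros Hcomp.
  pose proof (fun a => Hcomp _ (sierp_mor_is_mor hS hL hX a)) as Ha.
  apply mor_ext.
  - intros y; apply hT0; intros a.
    exact (f_equal (fun m => fst m y) (Ha a)).
  - intros a.
    pose proof (f_equal (fun m => snd m e) (Ha a)) as Hgen; simpl in Hgen.
    rewrite bar_generator in Hgen; exact Hgen.
Qed.
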